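(* In the setting described in the context, let $(\mathcal{M}_i)_{i=1}^n$ be mMVNNs. Then the map $p\mapsto W(p,(\mathcal{M}_i)_{i=1}^n)$ from $\mathbb{R}^m_{\ge0}$ to $\mathbb{R}$ is Lipschitz-continuous with Lipschitz constant $(n+1)\|c\|_2$.
   Context: Items $M=\{1,\ldots,m\}$ have capacities $c\in\mathbb{N}^m$; $\mathcal{X}=\{0,\ldots,c_1\}\times\cdots\times\{0,\ldots,c_m\}$; bidders $N=\{1,\ldots,n\}$; $\mathcal{F}=\{a\in\mathcal{X}^n:\sum_{i}a_{ij}\le c_j\ \forall j\}$. For $p\in\mathbb{R}^m_{\ge0}$: $U(p,\mathcal{M}_i)=\max_{x\in\mathcal{X}}\{\mathcal{M}_i(x)-\langle p,x\rangle\}$, $R(p)=\max_{a\in\mathcal{F}}\sum_i\langle p,a_i\rangle=\sum_j c_jp_j$, $W(p,(\mathcal{M}_i)_{i=1}^n)=R(p)+\sum_{i\in N}U(p,\mathcal{M}_i)$. An mMVNN is a map $\mathcal{M}:\mathcal{X}\to\mathbb{R}_{\ge0}$ of the form $\mathcal{M}(x)=W^{K}\varphi_{0,t^{K-1}}(\cdots\varphi_{0,t^1}(W^1(Dx)+b^1)\cdots)$, with $\varphi_{0,t}(z)=\min(t,\max(0,z))$ componentwise, cutoffs $t^k>0$, non-negative weight matrices $W^k\in\mathbb{R}^{d^k\times d^{k-1}}$ ($d^0=m$, $d^K=1$), non-positive bias vectors $b^k$, and $D=\mathrm{diag}(1/c_1,\ldots,1/c_m)$. *)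

From HB Require Import structures.
From mathcomp Require Import all_boot all_order all_algebra.
From mathcomp Require Import reals.

Set Implicit Arguments.
Unset Strict Implicit.
Unset Printing Implicit Defensive.

Import Order.TTheory GRing.Theory Num.Theory.
Local Open Scope ring_scope.

Section Defs.
Variable R : realType.

Definition bundle {m : nat} (c : 'I_m -> nat) :=
  {dffun forall j : 'I_m, 'I_(c j).+1}.

Definition bundle0 {m : nat} (c : 'I_m -> nat) : bundle c :=
  [ffun j => ord0].

Definition pairing {m : nat} {c : 'I_m -> nat} (p : 'I_m -> R) (x : bundle c) : R :=
  \sum_(j < m) p j * (x j : nat)%:R.

Definition norm2 {m : nat} (v : 'I_m -> R) : R :=
  Num.sqrt (\sum_(j < m) v j ^+ 2).

(* Utility U(p, M) = max_{x in X} (M x - <p,x>); the max over the nonempty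
   finite set X is written as a big max seeded with the value at x = 0 (which is in X). *)
Definition U {m : nat} {c : 'I_m -> nat} (p : 'I_m -> R) (M : bundle c -> R) : R :=
  \big[Num.max/(M (bundle0 c) - pairing p (bundle0 c))]_(x : bundle c)
     (M x - pairing p x).

Definition feasible {m n : nat} {c : 'I_m -> nat} (a : {ffun 'I_n -> bundle c}) : bool :=
  [forall j : 'I_m, (\sum_(i < n) (a i j : nat) <= c j)%N].

Definition alloc0 {m n : nat} (c : 'I_m -> nat) : {ffun 'I_n -> bundle c} :=
  [ffun _ => bundle0 c].

(* Revenue R(p) = max_{a in F} sum_i <p, a_i>; max seeded with the feasible zero allocation. *)
Definition Rev {m : nat} (n : nat) (c : 'I_m -> nat) (p : 'I_m -> R) : R :=
  \big[Num.max/(\sum_(i < n) pairing p (@alloc0 m n c i))]_(a : {ffun 'I_n -> bundle c} | feasible a)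
     (\sum_(i < n) pairing p (a i)).

Definition Wel {m n : nat} {c : 'I_m -> nat} (p : 'I_m -> R) (Ms : 'I_n -> bundle c -> R) : R :=
  Rev n c p + \sum_(i < n) U p (Ms i).

(* Monotone networks: [net d] takes inputs in R^d.
   NOut W      : final linear layer W^K (1 x d), no bias.
   NHid W b t N: hidden layer z |-> phi_{0,t}(W z + b), followed by N. *)
Inductive net : nat -> Type :=
| NOut : forall d : nat, 'M[R]_(1, d) -> net d
| NHid : forall d d' : nat, 'M[R]_(d', d) -> 'cV[R]_d' -> R -> net d' -> net d.

Definition phi (t z : R) : R := Num.min t (Num.max 0 z).

Fixpoint eval_net (d : nat) (N : net d) : 'cV[R]_d -> R :=
  match N in net d return 'cV[R]_d -> R with
  | @NOut d W => fun z => (W *m z) 0 0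
  | @NHid d d' W b t N' => fun z => eval_net N' (map_mx (phi t) (W *m z + b))
  end.

Fixpoint wf_net (d : nat) (N : net d) : Prop :=
  match N with
  | @NOut d W => forall i j, 0 <= W i j
  | @NHid d d' W b t N' =>
      (forall i j, 0 <= W i j) /\ (forall i j, b i j <= 0) /\ 0 < t /\ wf_net N'
  end.

Definition Dscale {m : nat} {c : 'I_m -> nat} (x : bundle c) : 'cV[R]_m :=
  \col_j ((x j : nat)%:R / (c j)%:R).

Definition is_mMVNN {m : nat} (c : 'I_m -> nat) (M : bundle c -> R) : Prop :=
  exists N : net m, wf_net N /\ forall x : bundle c, M x = eval_net N (Dscale x).

End Defs.

(* Every piece of W(p) is a maximum of functions that are affine in p with
   slope vector a bundle x (for U) or a feasible total allocation (for Rev);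
   in both cases the slope is bounded coordinatewise by c, so each piece moves
   by at most sum_j c_j |p_j - q_j| <= |c|_2 |p - q|_2 (Cauchy-Schwarz), and
   a maximum of such functions moves no more than they do.  W consists of
   n + 1 such pieces.  The network structure of the value functions, the
   positivity of c and the sign of the prices play no role. *)

From HB Require Import structures.
From mathcomp Require Import all_boot all_order all_algebra.
From mathcomp Require Import reals.
From mathcomp Require Import ring lra.
Import Order.TTheory GRing.Theory Num.Theory.
Local Open Scope ring_scope.

Section DistanceMax.
Variable R : realDomainType.

Lemma ler_dist_max (a a' b b' K : R) :
  `|a - b| <= K -> `|a' - b'| <= K -> `|Num.max a a' - Num.max b b'| <= K.
Proof.
rewrite !ler_norml => /andP[h1 h2] /andP[h3 h4].
by have [h|h] := leP a a'; have [h'|h'] := leP b b'; apply/andP; split; lra.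
Qed.

Lemma ler_dist_bigmax (I : finType) (P : pred I) (f g : I -> R) x0 y0 K :
  `|x0 - y0| <= K -> (forall i, P i -> `|f i - g i| <= K) ->
  `|\big[Num.max/x0]_(i | P i) f i - \big[Num.max/y0]_(i | P i) g i| <= K.
Proof.
move=> h0 hfg; apply: (big_ind2 (fun a b => `|a - b| <= K)) => //.
by move=> *; apply: ler_dist_max.
Qed.

Lemma CauchySchwarz_sum (m : nat) (a b : 'I_m -> R) :
  (\sum_j a j * b j) ^+ 2 <= (\sum_j a j ^+ 2) * (\sum_j b j ^+ 2).
Proof.
set A := \sum_j a j ^+ 2; set B := \sum_j b j ^+ 2; set C := \sum_j a j * b j.
have sq_ge0 : 0 <= \sum_i \sum_j (a i * b j - a j * b i) ^+ 2.
  by apply: sumr_ge0 => i _; apply: sumr_ge0 => j _; apply: sqr_ge0.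
suff lagrange : \sum_i \sum_j (a i * b j - a j * b i) ^+ 2 = 2%:R * (A * B - C ^+ 2).
  by move: sq_ge0; rewrite lagrange pmulr_rge0 // subr_ge0.
have AB : \sum_i \sum_j a i ^+ 2 * b j ^+ 2 = A * B.
  by rewrite mulr_suml; apply: eq_bigr => i _; rewrite mulr_sumr.
have BA : \sum_i \sum_j a j ^+ 2 * b i ^+ 2 = A * B.
  by rewrite -AB exchange_big.
have CC : \sum_i \sum_j (a i * b i) * (a j * b j) = C ^+ 2.
  by rewrite expr2 mulr_suml; apply: eq_bigr => i _; rewrite mulr_sumr.
have -> : \sum_i \sum_j (a i * b j - a j * b i) ^+ 2 =
    \sum_i \sum_j a i ^+ 2 * b j ^+ 2 + \sum_i \sum_j a j ^+ 2 * b i ^+ 2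
    - 2%:R * \sum_i \sum_j (a i * b i) * (a j * b j).
  rewrite mulr_sumr -big_split -sumrB; apply: eq_bigr => i _ /=.
  rewrite mulr_sumr -big_split -sumrB; apply: eq_bigr => j _ /=.
  ring.
by rewrite AB BA CC; ring.
Qed.

End DistanceMax.

Section WelfareLipschitz.
Local Set Implicit Arguments.
Local Unset Strict Implicit.
Variables (R : realType) (m : nat) (c : 'I_m -> nat).

Definition cdist (p q : 'I_m -> R) : R := \sum_j (c j)%:R * `|p j - q j|.

Lemma cdist_ge0 p q : 0 <= cdist p q.
Proof. by apply: sumr_ge0 => j _; rewrite mulr_ge0. Qed.

Lemma cdist_le_norm2 p q :
  cdist p q <= norm2 (fun j => (c j)%:R : R) * norm2 (fun j => p j - q j).
Proof.
rewrite /norm2 -sqrtrM; last by apply: sumr_ge0 => j _; apply: sqr_ge0.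
rewrite -(ger0_norm (cdist_ge0 p q)) -sqrtr_sqr ler_sqrt; last first.
  by apply: mulr_ge0; apply: sumr_ge0 => j _; apply: sqr_ge0.
have -> : \sum_j (p j - q j) ^+ 2 = \sum_j `|p j - q j| ^+ 2.
  by apply: eq_bigr => j _; rewrite real_normK // num_real.
exact: CauchySchwarz_sum.
Qed.

Lemma ler_dist_linear (v : 'I_m -> nat) p q : (forall j, (v j <= c j)%N) ->
  `|\sum_j p j * (v j)%:R - \sum_j q j * (v j)%:R| <= cdist p q.
Proof.
move=> le_vc; rewrite -sumrB; apply: le_trans (ler_norm_sum _ _ _) _.
apply: ler_sum => j _; rewrite -mulrBl normrM normr_nat mulrC.
by rewrite ler_wpM2r // ler_nat.
Qed.

Lemma ler_dist_pairing (x : bundle c) p q :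
  `|pairing p x - pairing q x| <= cdist p q.
Proof. by apply: ler_dist_linear => j; rewrite -ltnS. Qed.

Lemma ler_dist_U (M : bundle c -> R) p q : `|U p M - U q M| <= cdist p q.
Proof.
have dist_x x : `|(M x - pairing p x) - (M x - pairing q x)| <= cdist p q.
  by rewrite opprB addrC subrKA distrC ler_dist_pairing.
by apply: ler_dist_bigmax => [|x _]; apply: dist_x.
Qed.

Lemma sum_pairing n (a : {ffun 'I_n -> bundle c}) (p : 'I_m -> R) :
  \sum_(i < n) pairing p (a i) = \sum_j p j * (\sum_(i < n) (a i j : nat))%:R.
Proof.
rewrite exchange_big; apply: eq_bigr => j _ /=.
by rewrite natr_sum mulr_sumr.
Qed.

Lemma alloc0_feasible n : feasible (@alloc0 m n c).
Proof.
apply/forallP => j; rewrite big1 // => i _.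
by rewrite /alloc0 /bundle0 !ffunE.
Qed.

Lemma ler_dist_Rev n p q : `|Rev n c p - Rev n c q| <= cdist p q.
Proof.
have dist_a (a : {ffun 'I_n -> bundle c}) : feasible a ->
    `|\sum_(i < n) pairing p (a i) - \sum_(i < n) pairing q (a i)| <= cdist p q.
  by move=> /forallP; rewrite !sum_pairing; apply: ler_dist_linear.
by apply: ler_dist_bigmax => [|a]; apply: dist_a; rewrite ?alloc0_feasible.
Qed.

Lemma ler_dist_Wel n (Ms : 'I_n -> bundle c -> R) p q :
  `|Wel p Ms - Wel q Ms| <= n.+1%:R * cdist p q.
Proof.
have -> : Wel p Ms - Wel q Ms
    = (Rev n c p - Rev n c q) + \sum_i (U p (Ms i) - U q (Ms i)).
  by rewrite /Wel sumrB; ring.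
apply: le_trans (ler_normD _ _) _.
rewrite -addn1 natrD mulrDl mul1r addrC lerD ?ler_dist_Rev //.
apply: le_trans (ler_norm_sum _ _ _) _.
rewrite mulr_natl -[X in _ *+ X](card_ord n) -sumr_const.
by apply: ler_sum => i _; apply: ler_dist_U.
Qed.

End WelfareLipschitz.

Theorem lemma3 (R : realType) (m n : nat) (c : 'I_m -> nat)
    (hc : forall j, (0 < c j)%N)
    (Ms : 'I_n -> bundle c -> R)
    (hM : forall i, is_mMVNN (Ms i)) :
  forall p q : 'I_m -> R,
    (forall j, 0 <= p j) -> (forall j, 0 <= q j) ->
    `|Wel p Ms - Wel q Ms|
      <= (n.+1)%:R * norm2 (fun j => ((c j)%:R : R)) * norm2 (fun j => p j - q j).
Proof.
move=> p q _ _; rewrite -mulrA.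
apply: le_trans (ler_dist_Wel Ms p q) _.
by rewrite ler_wpM2l // cdist_le_norm2.
Qed.
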